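(* Let $F$ be a number field, $v$ a non-archimedean place of $F$, and $(m,u)\in\mathcal{O}_F\times\mathcal{O}_F^\times$ with $m^2-4u\notin F^2$. Let $\gamma_{m,u}=\begin{pmatrix}0&1\\-u&m\end{pmatrix}$ and let $\mathrm{G}_{\gamma_{m,u}}(F_v)$ be its centralizer in $\mathrm{GL}_2(F_v)$. If there is $\alpha\in F_v$ with $\alpha^2-m\alpha+u=0$, let $\alpha_1,\alpha_2$ be the roots of $x^2-mx+u$ in $F_v$; then \[ \left\{\begin{pmatrix}1&u^{-1}\alpha_i\\ \alpha_i&1\end{pmatrix}: i\in\{1,2\}\right\}\cup\left\{\begin{pmatrix}1&x\\ \alpha_i&0\end{pmatrix}: x\in F_v^\times,\ i\in\{1,2\}\right\}\cup\left\{\begin{pmatrix}1&x\\0&y\end{pmatrix}: x\in F_v,\ y\in F_v^\times\right\} \] is a set of representatives of $\mathrm{G}_{\gamma_{m,u}}(F_v)\backslash\mathrm{GL}_2(F_v)$. If there is no $\alpha\in F_v$ with $\alpha^2-m\alpha+u=0$, then $\left\{\begin{pmatrix}1&x\\0&y\end{pmatrix}: x\in F_v,\ y\in F_v^\times\right\}$ is a set of representatives of $\mathrm{G}_{\gamma_{m,u}}(F_v)\backslash\mathrm{GL}_2(F_v)$.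
   Context: $F_v$ is the completion of $F$ at $v$ and $\mathcal{O}_F$ the ring of integers of $F$. *)

From HB Require Import structures.
From mathcomp Require Import all_boot all_order all_algebra all_field.
From mathcomp Require Import reals.
Set Implicit Arguments. Unset Strict Implicit. Unset Printing Implicit Defensive.
Import Order.TTheory GRing.Theory Num.Theory.
Local Open Scope ring_scope.

Definition is_absval (T : fieldType) (R : realType) (f : T -> R) : Prop :=
  [/\ forall x, 0 <= f x,
      forall x, f x = 0 <-> x = 0,
      forall x y, f (x * y) = f x * f y &
      forall x y, f (x + y) <= f x + f y].

Definition non_archimedean (T : fieldType) (R : realType) (f : T -> R) : Prop :=
  forall x y, f (x + y) <= Num.max (f x) (f y).

Definition nontrivial_absval (T : fieldType) (R : realType) (f : T -> R) : Prop :=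
  exists x, x != 0 /\ f x != 1.

(* A non-archimedean place of F, given by a representative absolute value. *)
Definition nonarch_place (T : fieldType) (R : realType) (f : T -> R) : Prop :=
  [/\ is_absval f, non_archimedean f & nontrivial_absval f].

Definition absval_complete (T : fieldType) (R : realType) (f : T -> R) : Prop :=
  forall s : nat -> T,
    (forall e : R, 0 < e -> exists N : nat, forall n k : nat,
        (N <= n)%N -> (N <= k)%N -> f (s n - s k) < e) ->
    exists l : T, forall e : R, 0 < e -> exists N : nat, forall n : nat,
        (N <= n)%N -> f (s n - l) < e.

Definition is_completion (F : fieldType) (K : fieldType) (R : realType)
    (absF : F -> R) (iota : {rmorphism F -> K}) (absK : K -> R) : Prop :=
  [/\ is_absval absK,
      forall x, absK (iota x) = absF x,
      absval_complete absK &
      forall (x : K) (e : R), 0 < e -> exists y : F, absK (x - iota y) < e].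

Definition is_algint (F : fieldType) (x : F) : Prop :=
  exists p : {poly int}, p \is monic /\ root (map_poly (fun z : int => z%:~R) p) x.

Definition is_algint_unit (F : fieldType) (x : F) : Prop :=
  [/\ is_algint x, x != 0 & is_algint x^-1].

Definition mx2 (K : fieldType) (a b c d : K) : 'M[K]_2 :=
  \matrix_(i < 2, j < 2)
    if (i == 0 :> nat) then (if (j == 0 :> nat) then a else b)
    else (if (j == 0 :> nat) then c else d).

Definition gamma_mu (K : fieldType) (m u : K) : 'M[K]_2 := mx2 0 1 (- u) m.

Definition centralizer_GL2 (K : fieldType) (g : 'M[K]_2) (h : 'M[K]_2) : Prop :=
  h \in unitmx /\ h *m g = g *m h.

Definition right_coset_reps (K : fieldType) (H S : 'M[K]_2 -> Prop) : Prop :=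
  [/\ forall s, S s -> s \in unitmx,
      forall g, g \in unitmx -> exists s, S s /\ exists h, H h /\ g = h *m s &
      forall s1 s2, S s1 -> S s2 -> (exists h, H h /\ s1 = h *m s2) -> s1 = s2].

Definition reps_split (K : fieldType) (m u : K) (g : 'M[K]_2) : Prop :=
  (exists a : K, a ^+ 2 - m * a + u = 0 /\
     (g = mx2 1 (u^-1 * a) a 1 \/ exists x : K, x != 0 /\ g = mx2 1 x a 0))
  \/ (exists x y : K, y != 0 /\ g = mx2 1 x 0 y).

Definition reps_nonsplit (K : fieldType) (g : 'M[K]_2) : Prop :=
  exists x y : K, y != 0 /\ g = mx2 1 x 0 y.

From HB Require Import structures.
From mathcomp Require Import all_boot all_order all_algebra all_field.
From mathcomp Require Import reals ring.
Import Order.TTheory GRing.Theory Num.Theory.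
Local Open Scope ring_scope.

Set Implicit Arguments.
Unset Strict Implicit.
Unset Printing Implicit Defensive.

(* Only u <> 0 and m^2 - 4u <> 0 matter; the argument works over any field.
   The matrices commuting with gamma are the a + b gamma, acting on the first
   column c of g by h c. The form Q(c) = c2^2 - m c1 c2 + u c1^2 = -det [c, gamma c]
   is the norm form of K[gamma], so it gets multiplied by det h. If Q(c) <> 0,
   c is a cyclic vector and exactly one h moves it to (1, 0): this gives the
   upper triangular representatives. If Q(c) = 0, c is a multiple of an
   eigenvector (1, r), r a root of X^2 - mX + u, which h scales by a + b r; the
   h fixing (1, r) are those with a + b r = 1. They leave invariant the left
   eigenform (x, y) |-> r' x - y (r' the other root), which vanishes on the
   second column (u^-1 r, 1) and not on (x, 0), and in eigencoordinates every
   second column can be moved to exactly one of these. *)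

Section Mx2.
Variable K : fieldType.
Implicit Types a b c d : K.

Lemma mx2E (g : 'M[K]_2) : g = mx2 (g 0 0) (g 0 1) (g 1 0) (g 1 1).
Proof.
apply/matrixP => i j; rewrite !mxE.
by case: i => [[|[|i]] Hi]; case: j => [[|[|j]] Hj] //=; congr (g _ _); apply: val_inj.
Qed.

Lemma mulmx_mx2 a b c d a' b' c' d' :
  mx2 a b c d *m mx2 a' b' c' d' =
  mx2 (a * a' + b * c') (a * b' + b * d') (c * a' + d * c') (c * b' + d * d').
Proof.
apply/matrixP => i j; rewrite !mxE !big_ord_recr big_ord0 /= !mxE /= add0r.
by case: i => [[|[|i]] Hi]; case: j => [[|[|j]] Hj].
Qed.

Lemma mx2_inj a b c d a' b' c' d' :
  mx2 a b c d = mx2 a' b' c' d' -> [/\ a = a', b = b', c = c' & d = d'].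
Proof.
move=> E; have entry i j : mx2 a b c d i j = mx2 a' b' c' d' i j by rewrite E.
by move: (entry 0 0) (entry 0 1) (entry 1 0) (entry 1 1); rewrite !mxE.
Qed.

Lemma det_mx2 a b c d : \det (mx2 a b c d) = a * d - b * c.
Proof.
rewrite (expand_det_row _ 0) !big_ord_recr big_ord0 /= add0r /cofactor.
by rewrite !det_mx11 !mxE /=; ring.
Qed.

Lemma unitmx_mx2 a b c d : (mx2 a b c d \in unitmx) = (a * d - b * c != 0).
Proof. by rewrite unitmxE unitfE det_mx2. Qed.

End Mx2.

Section Centralizer.
Variables (K : fieldType) (m u : K).

(* a + b * gamma_mu m u *)
Definition centmx (a b : K) : 'M[K]_2 := mx2 a b (- u * b) (a + b * m).

(* Minus the determinant of the column c = (c1, c2) and gamma c. *)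
Definition qform (c1 c2 : K) : K := c2 ^+ 2 - m * c1 * c2 + u * c1 ^+ 2.

(* Second columns of the representatives whose first column is (1, r). *)
Definition eigen_shape (r x y : K) : Prop :=
  (x = u^-1 * r /\ y = 1) \/ (x != 0 /\ y = 0).

Lemma unitmx_centmx a b :
  (centmx a b \in unitmx) = (a * (a + b * m) + u * b ^+ 2 != 0).
Proof. by rewrite unitmx_mx2; congr (_ != 0); ring. Qed.

Lemma centralizer_gammaP h :
  centralizer_GL2 (gamma_mu m u) h <->
  exists a b, h = centmx a b /\ h \in unitmx.
Proof.
split=> [[hU] | [a [b [-> hU]]]]; last by split=> //; rewrite !mulmx_mx2; congr mx2; ring.
rewrite [h]mx2E in hU *; move: (h 0 0) (h 0 1) (h 1 0) (h 1 1) hU => a b c d hU.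
rewrite !mulmx_mx2 => /mx2_inj [e1 e2 _ _].
have ec : c = - u * b by transitivity (0 * a + 1 * c); [ring | rewrite -e1; ring].
have ed : d = a + b * m by transitivity (0 * b + 1 * d); [ring | rewrite -e2; ring].
by exists a, b; rewrite /centmx -ec -ed.
Qed.

Lemma qform_centmx a b c1 c2 :
  qform (a * c1 + b * c2) (- u * b * c1 + (a + b * m) * c2) =
  (a * (a + b * m) + u * b ^+ 2) * qform c1 c2.
Proof. by rewrite /qform; ring. Qed.

Lemma qform_col_eq0 c1 c2 d1 d2 :
  c1 * d2 - d1 * c2 != 0 -> qform c1 c2 = 0 ->
  c1 != 0 /\ (c2 / c1) ^+ 2 - m * (c2 / c1) + u = 0.
Proof.
move=> det_neq0 Q0; have c1_neq0 : c1 != 0.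
  apply: contra_neq det_neq0 => c10; move: Q0; rewrite /qform c10.
  by rewrite expr0n /= !(mulr0, mul0r) subr0 addr0 => /eqP; rewrite sqrf_eq0 => /eqP ->; ring.
by split=> //; rewrite -[RHS](mul0r (c1 ^- 2)) -Q0 /qform; field.
Qed.

Lemma reps_splitP s :
  reps_split m u s <->
  (exists r x y, [/\ r ^+ 2 - m * r + u = 0, eigen_shape r x y & s = mx2 1 x r y])
  \/ reps_nonsplit s.
Proof.
split=> [[[r [hr [-> | [x [x_neq0 ->]]]]] | ?] | [[r [x [y [hr shape ->]]]] | ?]].
- by left; exists r, (u^-1 * r), 1; split=> //; left.
- by left; exists r, x, 0; split=> //; right.
- by right.
- left; exists r; split=> //.
  by case: shape => [[-> ->] | [x_neq0 ->]]; [left | right; exists x].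
- by right.
Qed.

Hypothesis u_neq0 : u != 0.

Lemma upper_rep_exists c1 c2 d1 d2 :
  qform c1 c2 != 0 -> c1 * d2 - d1 * c2 != 0 ->
  exists x y, y != 0 /\ exists h, centralizer_GL2 (gamma_mu m u) h /\
    mx2 c1 d1 c2 d2 = h *m mx2 1 x 0 y.
Proof.
(* centmx c1 b sends (1, 0) to (c1, c2). *)
move=> Q_neq0 det_neq0; pose b := - c2 / u; pose N := qform c1 c2 / u.
exists ((d1 * (c1 + b * m) - b * d2) / N), ((c1 * d2 + u * b * d1) / N); split.
  have -> : (c1 * d2 + u * b * d1) / N = (c1 * d2 - d1 * c2) * u / qform c1 c2.
    by rewrite /N /b; field; rewrite Q_neq0 u_neq0.
  by rewrite !mulf_neq0 ?invr_eq0.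
exists (centmx c1 b); split.
  apply/centralizer_gammaP; exists c1, b; split=> //; rewrite unitmx_centmx.
  have -> : c1 * (c1 + b * m) + u * b ^+ 2 = N by rewrite /N /b /qform; field.
  by rewrite mulf_neq0 ?invr_eq0.
by rewrite mulmx_mx2 /N /b /qform; congr mx2; field; rewrite u_neq0.
Qed.

Lemma upper_rep_uniq h x1 y1 x2 y2 :
  centralizer_GL2 (gamma_mu m u) h ->
  mx2 1 x1 0 y1 = h *m mx2 1 x2 0 y2 -> mx2 1 x1 0 y1 = mx2 1 x2 0 y2.
Proof.
case/centralizer_gammaP=> a [b [-> _]]; rewrite mulmx_mx2 => /mx2_inj [e1 e2 e3 e4].
have b0 : b = 0.
  move/eqP: e3; rewrite !(mulr0, addr0, mulr1) eq_sym mulf_eq0 oppr_eq0.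
  by rewrite (negbTE u_neq0) => /eqP.
have a1 : a = 1 by rewrite e1 b0; ring.
by rewrite e2 e4 a1 b0; congr mx2; ring.
Qed.

Lemma eigen_neq_upper h r x1 y1 x2 y2 :
  centralizer_GL2 (gamma_mu m u) h -> r ^+ 2 - m * r + u = 0 ->
  mx2 1 x1 r y1 <> h *m mx2 1 x2 0 y2.
Proof.
case/centralizer_gammaP=> a [b [-> hU]] hr; rewrite mulmx_mx2 => /mx2_inj [e1 _ e3 _].
have Q1r : qform 1 r = 0 by rewrite -hr /qform; ring.
have Q10 : qform 1 0 = u by rewrite /qform; ring.
move: hU; rewrite unitmx_centmx => /eqP; apply; apply: (mulIf u_neq0).
by have := qform_centmx a b 1 0; rewrite -e1 -e3 Q1r Q10 mul0r => <-.
Qed.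

End Centralizer.

Section SplitCentralizer.
Variables (K : fieldType) (r r' : K).
Hypotheses (r_neq_r' : r != r') (r_neq0 : r != 0) (r'_neq0 : r' != 0).
Local Notation m := (r + r').
Local Notation u := (r * r').

Let r'_sub_r_neq0 : r' - r != 0. Proof. by rewrite subr_eq0 eq_sym. Qed.

(* The element of K[gamma] acting by c on the r-eigenline and by c' on the r'-eigenline. *)
Definition eigen_centmx (c c' : K) : 'M[K]_2 :=
  centmx m u (c - (c' - c) / (r' - r) * r) ((c' - c) / (r' - r)).

Lemma centralizer_eigen_centmx c c' :
  c != 0 -> c' != 0 -> centralizer_GL2 (gamma_mu m u) (eigen_centmx c c').
Proof.
move=> c_neq0 c'_neq0; apply/centralizer_gammaP.
pose b := (c' - c) / (r' - r); pose a := c - b * r.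
exists a, b; split=> //; rewrite unitmx_centmx.
have -> : a * (a + b * m) + u * b ^+ 2 = c * c' by rewrite /a /b; field.
exact: mulf_neq0.
Qed.

Lemma eigen_rep_unit x y : eigen_shape u r x y -> mx2 1 x r y \in unitmx.
Proof.
rewrite unitmx_mx2 => -[[-> ->] | [x_neq0 ->]].
  have -> : 1 * 1 - u^-1 * r * r = (r' - r) / r' by field; rewrite r_neq0 r'_neq0.
  by rewrite mulf_neq0 ?invr_eq0.
by rewrite mulr0 sub0r oppr_eq0 mulf_neq0.
Qed.

(* (p, q) are the coordinates of the second column in the eigenbasis (1, r), (1, r'). *)
Lemma eigen_rep_exists c1 p q : c1 != 0 -> q != 0 ->
  exists s, reps_split m u s /\ exists h, centralizer_GL2 (gamma_mu m u) h /\
    mx2 c1 (p + q) (r * c1) (r * p + r' * q) = h *m s.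
Proof.
move=> c1_neq0 q_neq0; have root_r : r ^+ 2 - m * r + u = 0 by ring.
have [-> | p_neq0] := eqVneq p 0.
  exists (mx2 1 (u^-1 * r) r 1); split.
    by apply/reps_splitP; left; exists r, (u^-1 * r), 1; split=> //; left.
  exists (eigen_centmx c1 (r' * q)); split.
    by apply: centralizer_eigen_centmx; rewrite ?mulf_neq0.
  by rewrite mulmx_mx2; congr mx2; field; rewrite ?r'_sub_r_neq0 ?r_neq0 ?r'_neq0.
pose x := p * (r' - r) / (c1 * r').
have x_neq0 : x != 0 by rewrite !mulf_neq0 ?invr_eq0 ?mulf_neq0.
exists (mx2 1 x r 0); split.
  by apply/reps_splitP; left; exists r, x, 0; split=> //; right.
exists (eigen_centmx c1 (- (q * r' * c1) / (p * r))); split.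
  apply: centralizer_eigen_centmx => //.
  by rewrite !mulf_neq0 ?oppr_eq0 ?invr_eq0 ?mulf_neq0.
rewrite mulmx_mx2 /x; congr mx2; field.
all: by rewrite ?r'_sub_r_neq0 ?r_neq0 ?r'_neq0 ?c1_neq0 ?p_neq0 ?q_neq0.
Qed.

Lemma eigen_shapeE x y : eigen_shape u r x y ->
  (x, y) = if r' * x - y == 0 then (u^-1 * r, 1) else ((r' * x - y) / r', 0).
Proof.
case=> [[-> ->] | [x_neq0 ->]].
  have -> : r' * (u^-1 * r) - 1 = 0 by field; rewrite r_neq0 r'_neq0.
  by rewrite eqxx.
by rewrite subr0 mulf_eq0 (negbTE r'_neq0) (negbTE x_neq0) mulrAC mulfV ?mul1r.
Qed.

(* (x, y) |-> r' x - y is a left eigenvector of gamma for the eigenvalue r. *)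
Lemma centmx_eigen_rep a b x y x1 c y1 :
  mx2 1 x1 c y1 = centmx m u a b *m mx2 1 x r y ->
  [/\ a + b * r = 1, c = r & r' * x1 - y1 = r' * x - y].
Proof.
rewrite mulmx_mx2 => /mx2_inj [e1 e2 e3 e4]; split.
- by rewrite e1; ring.
- by rewrite e3; transitivity ((a * 1 + b * r) * r); [ring | rewrite -e1 mul1r].
- by rewrite e2 e4; transitivity ((a * 1 + b * r) * (r' * x - y)); [ring | rewrite -e1 mul1r].
Qed.

Lemma eigen_rep_uniq s h x y :
  reps_split m u s -> eigen_shape u r x y -> centralizer_GL2 (gamma_mu m u) h ->
  s = h *m mx2 1 x r y -> s = mx2 1 x r y.
Proof.
move=> Rs shape /centralizer_gammaP [a [b [-> _]]].
case/reps_splitP: Rs => [[c [x1 [y1 [_ shape1 ->]]]] | [x1 [y1 [_ ->]]]]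
  => /centmx_eigen_rep [_ cr ell]; last by move: r_neq0; rewrite -cr eqxx.
rewrite cr in shape1 *.
by have := eigen_shapeE shape1; rewrite ell -(eigen_shapeE shape) => -[-> ->].
Qed.

End SplitCentralizer.

Section CosetReps.
Variables (K : fieldType) (m u : K).
Hypotheses (u_neq0 : u != 0) (disc_neq0 : m ^+ 2 - 4%:R * u != 0).

Lemma root_factor r : r ^+ 2 - m * r + u = 0 ->
  exists r', [/\ m = r + r', u = r * r', r != r', r != 0 & r' != 0].
Proof.
move=> root_r; exists (m - r).
have Eu : u = r * (m - r).
  by transitivity (r * (m - r) + (r ^+ 2 - m * r + u)); [ring | rewrite root_r addr0].
have disc : m ^+ 2 - 4%:R * u = (r - (m - r)) ^+ 2 by rewrite Eu; ring.
split=> //; first by ring.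
- by apply: contra_neq disc_neq0 => rr'; rewrite disc -rr' subrr expr0n.
- by apply: contra_neq u_neq0 => r0; rewrite Eu r0 mul0r.
- by apply: contra_neq u_neq0 => r'0; rewrite Eu r'0 mulr0.
Qed.

Lemma reps_split_unit s : reps_split m u s -> s \in unitmx.
Proof.
case/reps_splitP => [[r [x [y [root_r shape ->]]]] | [x [y [y_neq0 ->]]]].
  have [r' [_ Eu rr' r_neq0 r'_neq0]] := root_factor root_r.
  by rewrite Eu in shape; exact: eigen_rep_unit shape.
by rewrite unitmx_mx2 mulr0 subr0 mul1r.
Qed.

Lemma reps_split_cover g : g \in unitmx ->
  exists s, reps_split m u s /\
    exists h, centralizer_GL2 (gamma_mu m u) h /\ g = h *m s.
Proof.
rewrite [g]mx2E unitmx_mx2; move: (g 0 0) (g 0 1) (g 1 0) (g 1 1) => c1 d1 c2 d2 det_neq0.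
have [Q_eq0 | Q_neq0] := eqVneq (qform m u c1 c2) 0; last first.
  have [x [y [y_neq0 cover]]] := upper_rep_exists u_neq0 Q_neq0 det_neq0.
  by exists (mx2 1 x 0 y); split=> //; right; exists x, y.
have [c1_neq0 root_r] := qform_col_eq0 det_neq0 Q_eq0.
have c2E : c2 = c2 / c1 * c1 by rewrite divfK.
move: (c2 / c1) c2E root_r det_neq0 => r -> root_r det_neq0.
have [r' [-> -> rr' r_neq0 r'_neq0]] := root_factor root_r.
have r'r_neq0 : r' - r != 0 by rewrite subr_eq0 eq_sym.
pose q := (d2 - r * d1) / (r' - r).
have q_neq0 : q != 0.
  apply: contra_neq det_neq0 => q0.
  have -> : c1 * d2 - d1 * (r * c1) = c1 * q * (r' - r) by rewrite /q; field.
  by rewrite q0 mulr0 mul0r.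
have -> : d2 = r * (d1 - q) + r' * q by rewrite /q; field.
rewrite -{1}[d1](subrK q).
exact: eigen_rep_exists.
Qed.

Lemma reps_nonsplit_cover g :
  ~ (exists r, r ^+ 2 - m * r + u = 0) -> g \in unitmx ->
  exists s, reps_nonsplit s /\
    exists h, centralizer_GL2 (gamma_mu m u) h /\ g = h *m s.
Proof.
move=> no_root; rewrite [g]mx2E unitmx_mx2.
move: (g 0 0) (g 0 1) (g 1 0) (g 1 1) => c1 d1 c2 d2 det_neq0.
have [Q_eq0 | Q_neq0] := eqVneq (qform m u c1 c2) 0.
  by case: no_root; exists (c2 / c1); case: (qform_col_eq0 det_neq0 Q_eq0).
have [x [y [y_neq0 cover]]] := upper_rep_exists u_neq0 Q_neq0 det_neq0.
by exists (mx2 1 x 0 y); split=> //; exists x, y.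
Qed.

Lemma reps_split_inj s1 s2 h :
  reps_split m u s1 -> reps_split m u s2 -> centralizer_GL2 (gamma_mu m u) h ->
  s1 = h *m s2 -> s1 = s2.
Proof.
move=> R1 R2 Gh; case/reps_splitP: R2 => [[r [x [y [root_r shape ->]]]] | [x2 [y2 [_ ->]]]].
  have [r' [Em Eu _ r_neq0 r'_neq0]] := root_factor root_r.
  rewrite Em Eu in R1 Gh shape.
  exact: eigen_rep_uniq R1 shape Gh.
case/reps_splitP: R1 => [[r [x1 [y1 [root_r _ ->]]]] | [x1 [y1 [_ ->]]]] E.
  by case: (eigen_neq_upper u_neq0 Gh root_r E).
exact: (upper_rep_uniq u_neq0 Gh E).
Qed.

End CosetReps.

Theorem lemma3p5 (R : realType) (F : fieldExtType rat) (absF : F -> R)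
  (K : fieldType) (iota : {rmorphism F -> K}) (absK : K -> R)
  (m u : F) :
  nonarch_place absF ->
  is_completion absF iota absK ->
  is_algint m -> is_algint_unit u ->
  ~ (exists s : F, s ^+ 2 = m ^+ 2 - 4%:R * u) ->
  let mv := iota m in let uv := iota u in
  let G := centralizer_GL2 (gamma_mu mv uv) in
  ((exists a : K, a ^+ 2 - mv * a + uv = 0) ->
     right_coset_reps G (reps_split mv uv)) /\
  (~ (exists a : K, a ^+ 2 - mv * a + uv = 0) ->
     right_coset_reps G (@reps_nonsplit K)).
Proof.
move=> _ _ _ [_ u_neq0 _] disc_not_square mv uv G.
have uv_neq0 : uv != 0 by rewrite fmorph_eq0.
have disc_neq0 : mv ^+ 2 - 4%:R * uv != 0.
  rewrite -(rmorph_nat iota) -!rmorphXn -rmorphM -rmorphB fmorph_eq0.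
  by apply/eqP => disc0; apply: disc_not_square; exists 0; rewrite expr0n disc0.
have nonsplit_split s : reps_nonsplit s -> reps_split mv uv s by right.
split=> [_ | no_root]; split.
- exact: reps_split_unit.
- exact: reps_split_cover.
- by move=> s1 s2 R1 R2 [h [Gh E]]; apply: reps_split_inj R1 R2 Gh E.
- by move=> s /nonsplit_split; apply: reps_split_unit.
- by move=> g /(reps_nonsplit_cover uv_neq0 no_root).
- move=> s1 s2 /nonsplit_split R1 /nonsplit_split R2 [h [Gh E]].
  exact: reps_split_inj R1 R2 Gh E.
Qed.
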